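(* Let $p\ge3$ be a prime and let $\mathbf{Q}_p(\sqrt d)$ be an unramified quadratic extension of $\mathbf{Q}_p$. Suppose $\lambda\in U^0(\sqrt d)$ has order $l$ modulo $p$, and let $k=\nu_p(\lambda^l-1)$. Then the closed subgroup of $U^0(\sqrt d)$ generated by $\lambda$ is $$\overline{\{\lambda^n:n\in\mathbf{N}\}}=\bigsqcup_{i=0}^{l-1}\left(\lambda^i+p^k\mathbf{Z}_p[\sqrt d]\right)\cap U^0(\sqrt d).$$ In particular, if $l=2(p+1)$ and $k=1$, then $\overline{\{\lambda^n:n\in\mathbf{N}\}}=U^0(\sqrt d)$.
   Context: Here $d\in\mathbf{Z}_p^*$ is a non-square, and $\mathbf{Z}_p[\sqrt d]$ is the ring of integers of $\mathbf{Q}_p(\sqrt d)$. The norm is $N(x+y\sqrt d)=x^2-y^2d$, and $U^0(\sqrt d)=\{z\in\mathbf{Z}_p[\sqrt d]^*: N(z)=\pm1\}$. The order of a unit $\lambda$ modulo $p$ is the least $l\ge1$ with $\lambda^l-1\in p\mathbf{Z}_p[\sqrt d]$. $\nu_p$ is the valuation on $\mathbf{Q}_p(\sqrt d)$ with $\nu_p(p)=1$. $\bigsqcup$ denotes disjoint union. *)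

(* A self-contained model of Z_p and Z_p[sqrt d] as inverse
   limits: an element of Z_p is a coherent sequence a : nat -> int with
   0 <= a n < p^n and a n = a (n+1) mod p^n (so a n is the image in Z/p^n);
   an element of Z_p[sqrt d] = Z_p + Z_p sqrt d is a coherent sequence of
   pairs (x_n, y_n) standing for x + y sqrt d mod p^n. *)
From mathcomp Require Import all_boot all_algebra.
Set Implicit Arguments. Unset Strict Implicit. Unset Printing Implicit Defensive.
Import GRing.Theory Num.Theory.
Local Open Scope ring_scope.

Definition pk (p n : nat) : int := (p%:Z) ^+ n.

Definition coh (p : nat) (a : nat -> int) : Prop :=
  forall n : nat, a n = (a n.+1 %% pk p n)%Z.

Definition cohO (p : nat) (z : nat -> int * int) : Prop :=
  coh p (fun n => (z n).1) /\ coh p (fun n => (z n).2).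

Definition mulO (p : nat) (d : nat -> int) (z w : nat -> int * int) : nat -> int * int :=
  fun n => ((((z n).1 * (w n).1 + d n * ((z n).2 * (w n).2)) %% pk p n)%Z,
            (((z n).1 * (w n).2 + (z n).2 * (w n).1) %% pk p n)%Z).

Definition oneO (p : nat) : nat -> int * int := fun n => ((1 %% pk p n)%Z, 0).

Definition subO (p : nat) (z w : nat -> int * int) : nat -> int * int :=
  fun n => ((((z n).1 - (w n).1) %% pk p n)%Z, (((z n).2 - (w n).2) %% pk p n)%Z).

Definition powO (p : nat) (d : nat -> int) (z : nat -> int * int) (m : nat) :
  nat -> int * int := iter m (mulO p d z) (oneO p).

Definition normO (p : nat) (d : nat -> int) (z : nat -> int * int) : nat -> int :=
  fun n => (((z n).1 ^+ 2 - d n * (z n).2 ^+ 2) %% pk p n)%Z.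

Definition oneZp (p : nat) : nat -> int := fun n => (1 %% pk p n)%Z.
Definition m1Zp (p : nat) : nat -> int := fun n => ((-1) %% pk p n)%Z.

Definition unitO (p : nat) (d : nat -> int) (z : nat -> int * int) : Prop :=
  exists w, cohO p w /\ mulO p d z w = oneO p.

Definition U0 (p : nat) (d : nat -> int) (z : nat -> int * int) : Prop :=
  cohO p z /\ unitO p d z /\ (normO p d z = oneZp p \/ normO p d z = m1Zp p).

(* z \in p^k Z_p[sqrt d], for k \in N \cup {oo} (None = oo, p^oo Z_p[sqrt d] = 0) *)
Definition in_pkO (k : option nat) (z : nat -> int * int) : Prop :=
  match k with
  | Some k => z k = (0, 0)
  | None => forall n, z n = (0, 0)
  end.

(* nu_p(z) = k, with nu_p(0) = oo (None) *)
Definition nuO (z : nat -> int * int) (k : option nat) : Prop :=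
  match k with
  | Some k => z k = (0, 0) /\ z k.+1 <> (0, 0)
  | None => forall n, z n = (0, 0)
  end.

Definition order_modp (p : nat) (d : nat -> int) (lam : nat -> int * int) (l : nat) : Prop :=
  (0 < l)%N /\ in_pkO (Some 1%N) (subO p (powO p d lam l) (oneO p)) /\
  forall m, (0 < m < l)%N -> ~ in_pkO (Some 1%N) (subO p (powO p d lam m) (oneO p)).

Definition in_closure (p : nat) (d : nat -> int) (lam z : nat -> int * int) : Prop :=
  forall k : nat, exists n : nat, in_pkO (Some k) (subO p (powO p d lam n) z).

Definition in_piece (p : nat) (d : nat -> int) (lam : nat -> int * int) (k : option nat)
  (i : nat) (z : nat -> int * int) : Prop :=
  in_pkO k (subO p z (powO p d lam i)) /\ U0 p d z.

Definition nonsquareZp (p : nat) (d : nat -> int) : Prop :=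
  ~ exists s, coh p s /\ forall n, ((s n * s n) %% pk p n)%Z = d n.

(* Modulo p^m an element of Z_p[sqrt d] is an element of Z[sqrt(d_m)], with
   d_m the m-th approximation of d, and the norms of an element of U^0 are
   congruent to a fixed sign e = +-1 at all levels.  Write mu = lam^l =
   1 + p^k y with p not dividing y.  As N(1 + p^j y) = 1 + 2 p^j y_1 + p^(2j) N(y)
   and p is odd, norm 1 forces p | y_1, hence p does not divide y_2; likewise
   mu^(p^i) = 1 + p^(k+i) y_i.  So any W = 1 mod p^k of norm 1 is a limit of
   powers of mu, one p-adic digit at a time: multiplying by mu^(t p^i) shifts
   the sqrt d-coordinate by t p^(k+i) y_2, while the other coordinate is
   controlled by the norm.  Applied to W = e z conj(lam^i) this puts the whole
   coset lam^i + p^k Z_p[sqrt d] of U^0 into the closure; conversely, limits of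
   lam^n lie in the coset of lam^(n mod l), and the cosets are disjoint since l
   is the order of lam mod p.  For l = 2(p+1) the l distinct residues of the
   lam^i exhaust the at most 2(p+1) elements of norm +-1 in F_p^2. *)

From HB Require Import structures.
From mathcomp Require Import all_boot all_algebra ring zify.
From Stdlib Require Import FunctionalExtensionality.
Set Implicit Arguments. Unset Strict Implicit. Unset Printing Implicit Defensive.
Import GRing.Theory.
Local Open Scope ring_scope.

(** * The ring R[sqrt D] *)

(* The pair (a, b) stands for a + b sqrt D. *)
Definition quad (R : comNzRingType) (D : R) : Type := (R * R)%type.

Definition mulq (R : comNzRingType) (D : R) (x y : R * R) : R * R :=
  (x.1 * y.1 + D * (x.2 * y.2), x.1 * y.2 + x.2 * y.1).

Section QuadRingLaws.
Variables (R : comNzRingType) (D : R).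

Lemma mulqA : associative (mulq D).
Proof. by move=> [a b] [c e] [f g]; congr pair; rewrite /=; ring. Qed.

Lemma mulqC : commutative (mulq D).
Proof. by move=> [a b] [c e]; congr pair; rewrite /=; ring. Qed.

Lemma mul1q : left_id (1, 0) (mulq D).
Proof. by move=> [a b]; congr pair; rewrite /=; ring. Qed.

Lemma mulqDl : left_distributive (mulq D) +%R.
Proof. by move=> [a b] [c e] [f g]; congr pair; rewrite /=; ring. Qed.

Lemma oneq_neq0 : ((1, 0) : R * R) != 0.
Proof. by rewrite xpair_eqE oner_eq0. Qed.
End QuadRingLaws.

HB.instance Definition _ (R : comNzRingType) (D : R) := GRing.Zmodule.on (quad D).
HB.instance Definition _ (R : comNzRingType) (D : R) :=
  GRing.Zmodule_isComNzRing.Build (quad D)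
    (@mulqA R D) (@mulqC R D) (@mul1q R D) (@mulqDl R D) (@oneq_neq0 R).

Definition conjq (R : comNzRingType) (D : R) (x : quad D) : quad D := (x.1, - x.2).
Definition normq (R : comNzRingType) (D : R) (x : quad D) : R := x.1 ^+ 2 - D * x.2 ^+ 2.
Arguments normq {R} D x.

Section QuadTheory.
Variables (R : comNzRingType) (D : R).
Implicit Types x y : quad D.

Lemma mulqE x y : x * y = mulq D x y. Proof. by []. Qed.

Lemma addqE x y : x + y = (x.1 + y.1, x.2 + y.2). Proof. by []. Qed.

Lemma oppqE x : - x = (- x.1, - x.2). Proof. by []. Qed.

Lemma natrq n : (n%:R : quad D) = (n%:R, 0).
Proof. by elim: n => [|n IH] //; rewrite !mulrS IH addqE /= addr0. Qed.

Lemma intrq c : (c%:~R : quad D) = (c%:~R, 0).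
Proof.
case: c => n; first exact: natrq.
by rewrite NegzE !intrN -!pmulrn natrq oppqE /= oppr0.
Qed.

Lemma mulq_intrl c y : c%:~R * y = (c%:~R * y.1, c%:~R * y.2).
Proof. by rewrite intrq mulqE; congr pair; rewrite /=; ring. Qed.

Lemma mulrnq x n : x *+ n = (x.1 *+ n, x.2 *+ n).
Proof. by elim: n => [|n IH]; rewrite ?mulr0n // !mulrS IH. Qed.

Lemma mulq_conj x : x * conjq x = (normq D x, 0).
Proof. by rewrite mulqE; congr pair; rewrite /normq /=; ring. Qed.

Lemma normqM x y : normq D (x * y) = normq D x * normq D y.
Proof. by rewrite /normq /=; ring. Qed.

Lemma normq1 : normq D 1 = 1.
Proof. by rewrite /normq /=; ring. Qed.

Lemma normqX x n : normq D (x ^+ n) = normq D x ^+ n.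
Proof. by elim: n => [|n IH]; rewrite ?normq1 // !exprS normqM IH. Qed.

Lemma normq_conj x : normq D (conjq x) = normq D x.
Proof. by rewrite /normq sqrrN. Qed.

Lemma exp1D_taylor2 (a : quad D) n : exists c : quad D,
  (1 + a) ^+ n = 1 + a *+ n + a ^+ 2 *+ 'C(n, 2) + a ^+ 3 * c.
Proof.
elim: n => [|n [c IH]]; first by exists 0; rewrite expr0 !mulr0n mulr0 !addr0.
exists ('C(n, 2)%:R + c + c * a).
by rewrite exprSr IH binS bin1 mulrnDr; ring.
Qed.
End QuadTheory.

(** * Congruences in Z[sqrt D] *)

Definition dvdq (c : int) (x : int * int) : bool := (c %| x.1)%Z && (c %| x.2)%Z.

Section DvdqAdditive.
Variable c : int.
Implicit Types x y : int * int.

Lemma dvdq0 : dvdq c 0.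
Proof. by rewrite /dvdq !dvdz0. Qed.

Lemma dvdqD x y : dvdq c x -> dvdq c y -> dvdq c (x + y).
Proof. by move=> /andP[x1 x2] /andP[y1 y2]; rewrite /dvdq !rpredD. Qed.

Lemma dvdqN x : dvdq c (- x) = dvdq c x.
Proof. by rewrite /dvdq !rpredN. Qed.

Lemma dvdqB x y : dvdq c x -> dvdq c y -> dvdq c (x - y).
Proof. by move=> hx hy; rewrite dvdqD ?dvdqN. Qed.

Lemma dvdq_subC x y : dvdq c (x - y) = dvdq c (y - x).
Proof. by rewrite -dvdqN opprB. Qed.

Lemma dvdq_sub_trans x y z : dvdq c (x - y) -> dvdq c (y - z) -> dvdq c (x - z).
Proof. by move=> h1 h2; rewrite -(subrKA y); apply: dvdqD. Qed.

Lemma dvdqMn x n : dvdq c x -> dvdq c (x *+ n).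
Proof. by move=> hx; elim: n => [|n IH]; rewrite ?mulr0n ?dvdq0 // mulrS dvdqD. Qed.

Lemma dvdq_trans e x : (c %| e)%Z -> dvdq e x -> dvdq c x.
Proof. by move=> ce /andP[x1 x2]; rewrite /dvdq !(dvdz_trans ce). Qed.
End DvdqAdditive.

Definition is_sign (e : int) : Prop := e = 1 \/ e = -1.

Lemma is_signX e n : is_sign e -> is_sign (e ^+ n).
Proof.
case=> ->; first by left; rewrite expr1n.
by rewrite -signr_odd; case: (odd n); [right; rewrite expr1 | left; rewrite expr0].
Qed.

Lemma is_sign_sqr e : is_sign e -> e * e = 1.
Proof. by case=> ->. Qed.

Lemma is_sign_eq_mod p e e' : (2 < p)%N -> is_sign e -> is_sign e' ->
  (p%:Z %| e - e')%Z -> e = e'.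
Proof.
move=> p2 [] -> [] -> //.
  by have -> : (1 - -1 : int) = 2%:Z by []; rewrite dvdzE /= => /dvdn_leq; lia.
by have -> : (-1 - 1 : int) = - 2%:Z by []; rewrite dvdzE abszN /= => /dvdn_leq; lia.
Qed.

Section DvdqRing.
Variable D : int.
Implicit Types (a c e : int) (x y : quad D).

Lemma dvdq_mulr c x y : dvdq c x -> dvdq c (x * y).
Proof.
move=> /andP[x1 x2]; rewrite mulqE /dvdq /=.
by rewrite !rpredD ?(dvdz_mulr _ x1) ?(dvdz_mulr _ x2) ?(dvdz_mull _ (dvdz_mulr _ x2)).
Qed.

Lemma dvdq_mull c x y : dvdq c y -> dvdq c (x * y).
Proof. by rewrite mulrC; apply: dvdq_mulr. Qed.

Lemma dvdq_intr c a : dvdq c (a%:~R : quad D) = (c %| a)%Z.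
Proof. by rewrite intrq /dvdq intz dvdz0 andbT. Qed.

Lemma dvdqP c x : reflect (exists y, x = c%:~R * y) (dvdq c x).
Proof.
apply: (iffP andP) => [[/dvdzP[q1 e1] /dvdzP[q2 e2]] | [y ->]].
  by exists (q1, q2); rewrite mulq_intrl !intz; case: x e1 e2 => a b /= -> ->; rewrite !(mulrC c).
by rewrite mulq_intrl !intz /= !dvdz_mulr.
Qed.

Lemma mulq_conjz x : x * conjq x = (normq D x)%:~R.
Proof. by rewrite mulq_conj intrq intz. Qed.

Lemma normq_intr a : normq D (a%:~R : quad D) = a ^+ 2.
Proof. by rewrite intrq /normq /= intz; ring. Qed.

Lemma dvdq_mul2l c e y : c != 0 -> dvdq (c * e) (c%:~R * y) = dvdq e y.
Proof. by move=> c0; rewrite mulq_intrl /dvdq !intz /= !dvdz_mul2l. Qed.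

Lemma dvdq_norm c x y : dvdq c (x - y) -> (c %| normq D x - normq D y)%Z.
Proof.
move=> /andP[/= h1 h2].
have -> : normq D x - normq D y =
    (x.1 - y.1) * (x.1 + y.1) - D * ((x.2 - y.2) * (x.2 + y.2)) by rewrite /normq; ring.
by rewrite rpredB ?(dvdz_mulr _ h1) ?(dvdz_mull _ (dvdz_mulr _ h2)).
Qed.

Lemma dvdq_subXX c x y n : dvdq c (x - y) -> dvdq c (x ^+ n - y ^+ n).
Proof. by rewrite subrXX; apply: dvdq_mulr. Qed.

Lemma dvdq_cancel_l c s x y : is_sign s -> (c %| normq D x - s)%Z ->
  dvdq c (x * y) -> dvdq c y.
Proof.
move=> ss hx hxy.
have -> : y = s%:~R * (conjq x * (x * y) - (x * conjq x - s%:~R) * y) + (1 - s * s)%:~R * y.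
  by ring.
rewrite is_sign_sqr // subrr mulr0z mul0r addr0 mulq_conjz -intrB.
by apply/dvdq_mull/dvdqB; [apply: dvdq_mull | apply/dvdq_mulr; rewrite dvdq_intr].
Qed.

Lemma dvdq_expr_modn c x l n : dvdq c (x ^+ l - 1) -> dvdq c (x ^+ n - x ^+ (n %% l)).
Proof.
move=> hl; rewrite {1}(divn_eq n l) exprD mulnC exprM -{2}[x ^+ (n %% l)]mul1r -mulrBl.
by apply: dvdq_mulr; have := dvdq_subXX (n %/ l) hl; rewrite expr1n.
Qed.

Lemma dvdq_mul_congr c D' x y (x' y' : quad D') : (c %| D - D')%Z ->
  dvdq c (x - x') -> dvdq c (y - y') -> dvdq c (x * y - x' * y').
Proof.
move=> hD /andP[/= hx1 hx2] /andP[/= hy1 hy2]; apply/andP; split => /=.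
  have -> : x.1 * y.1 + D * (x.2 * y.2) - (x'.1 * y'.1 + D' * (x'.2 * y'.2)) =
      (x.1 - x'.1) * y.1 + x'.1 * (y.1 - y'.1) + (D - D') * (x.2 * y.2)
      + D' * ((x.2 - x'.2) * y.2) + D' * (x'.2 * (y.2 - y'.2)) by ring.
  by rewrite !rpredD ?(dvdz_mulr _ hx1) ?(dvdz_mull _ hy1) ?(dvdz_mulr _ hD)
    ?(dvdz_mull _ (dvdz_mulr _ hx2)) ?(dvdz_mull _ (dvdz_mull _ hy2)).
have -> : x.1 * y.2 + x.2 * y.1 - (x'.1 * y'.2 + x'.2 * y'.1) =
    (x.1 - x'.1) * y.2 + x'.1 * (y.2 - y'.2) + (x.2 - x'.2) * y.1 + x'.2 * (y.1 - y'.1) by ring.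
by rewrite !rpredD ?(dvdz_mulr _ hx1) ?(dvdz_mull _ hy2) ?(dvdz_mulr _ hx2) ?(dvdz_mull _ hy1).
Qed.

Lemma dvdq_exp_congr c D' x (x' : quad D') n : (c %| D - D')%Z ->
  dvdq c (x - x') -> dvdq c (x ^+ n - x' ^+ n).
Proof.
move=> hD hx; elim: n => [|n IH]; first by rewrite !expr0 subrr dvdq0.
by rewrite !exprS; apply: dvdq_mul_congr.
Qed.
End DvdqRing.

(** * Finite levels of Z_p and Z_p[sqrt d] *)

Section Levels.
Variable p : nat.

Lemma pkS n : pk p n.+1 = pk p n * p%:Z.
Proof. by rewrite /pk exprSr. Qed.

Lemma pkD m n : pk p (m + n) = pk p m * pk p n.
Proof. by rewrite /pk exprD. Qed.

Lemma pk1 : pk p 1%N = p%:Z.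
Proof. by rewrite /pk expr1. Qed.

Lemma pk_dvd m n : (m <= n)%N -> (pk p m %| pk p n)%Z.
Proof. exact: dvdz_exp2l. Qed.

Lemma coh_le a m n : coh p a -> (m <= n)%N -> (pk p m %| a n - a m)%Z.
Proof.
move=> ha; elim: n => [|n IH]; first by rewrite leqn0 => /eqP->; rewrite subrr dvdz0.
rewrite leq_eqVlt ltnS => /orP[/eqP->|mn]; first by rewrite subrr dvdz0.
have step : (pk p n %| a n.+1 - a n)%Z.
  by rewrite (ha n) {1}(divz_eq (a n.+1) (pk p n)) addrK dvdz_mull.
by rewrite -(subrKA (a n)) rpredD ?IH // (dvdz_trans (pk_dvd mn) step).
Qed.

Definition red n (x : int * int) : int * int := ((x.1 %% pk p n)%Z, (x.2 %% pk p n)%Z).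

Lemma red_eq n x y : red n x = red n y <-> dvdq (pk p n) (x - y).
Proof.
rewrite /red /dvdq -!eqz_mod_dvd; split => [[-> ->]|/andP[/eqP -> /eqP ->]] //.
by rewrite !eqxx.
Qed.

Lemma dvdq_redl n x y : dvdq (pk p n) (red n x - y) = dvdq (pk p n) (x - y).
Proof. by rewrite /dvdq /= -!eqz_mod_dvd !modz_mod. Qed.

Lemma in_pkO_subO (z w : nat -> int * int) n :
  in_pkO (Some n) (subO p z w) <-> dvdq (pk p n) (z n - w n).
Proof.
rewrite /in_pkO /subO; have -> : ((0 : int), (0 : int)) = red n 0 by rewrite /red mod0z.
by have := red_eq n (z n - w n) 0; rewrite subr0.
Qed.

Definition pcoherent (X : nat -> int * int) : Prop :=
  forall m n, (m <= n)%N -> dvdq (pk p m) (X n - X m).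

Lemma cohO_pcoherent z : cohO p z -> pcoherent z.
Proof. by case=> z1 z2 m n mn; apply/andP; split; [apply: coh_le z1 mn | apply: coh_le z2 mn]. Qed.

Lemma pcoherent_const x : pcoherent (fun=> x).
Proof. by move=> m n _; rewrite subrr dvdq0. Qed.

Lemma pcoherentB X Y : pcoherent X -> pcoherent Y -> pcoherent (fun n => X n - Y n).
Proof.
move=> hX hY m n mn; rewrite opprD opprK addrACA.
by apply: dvdqD; [apply: hX | rewrite addrC dvdq_subC; apply: hY].
Qed.

Lemma dvdq_pcoherent X m n : pcoherent X -> (m <= n)%N ->
  dvdq (pk p m) (X n) = dvdq (pk p m) (X m).
Proof.
move=> hX mn; have h := hX m n mn.
apply/idP/idP => hm; last by rewrite -(subrK (X m) (X n)) dvdqD.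
have -> : X m = X n - (X n - X m) by rewrite opprB addrC subrK.
exact: dvdqB.
Qed.

Variable d : nat -> int.
Hypothesis d_coh : coh p d.

Lemma pcoherent_exp X e : pcoherent X -> pcoherent (fun n => (X n : quad (d n)) ^+ e).
Proof. by move=> hX m n mn; apply: dvdq_exp_congr; [apply: coh_le | apply: hX]. Qed.

Lemma normq_pcoherent X m n : pcoherent X -> (m <= n)%N ->
  (pk p m %| normq (d n) (X n) - normq (d m) (X m))%Z.
Proof.
move=> hX mn.
have -> : normq (d n) (X n) - normq (d m) (X m) =
    (normq (d n) (X n) - normq (d n) (X m)) - (d n - d m) * (X m).2 ^+ 2 by rewrite /normq; ring.
by rewrite rpredB ?dvdz_mulr ?(coh_le d_coh mn) // dvdq_norm ?hX.
Qed.

Lemma powO_level (lam : nat -> int * int) e n :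
  powO p d lam e n = red n ((lam n : quad (d n)) ^+ e).
Proof.
elim: e => [|e IH]; first by rewrite /powO /= /oneO /red /= mod0z.
have -> : powO p d lam e.+1 n = red n ((lam n : quad (d n)) * powO p d lam e n) by [].
rewrite IH; apply/red_eq.
rewrite exprS; apply: dvdq_mul_congr; first by rewrite subrr dvdz0.
  by rewrite subrr dvdq0.
by rewrite dvdq_redl subrr dvdq0.
Qed.
End Levels.

(** * Approximation by powers *)

Lemma dvdz_subXX (c a b : int) n : (c %| a - b)%Z -> (c %| a ^+ n - b ^+ n)%Z.
Proof. by move=> h; rewrite subrXX dvdz_mulr. Qed.

Lemma dvdz_subX1 (c a : int) n : (c %| a - 1)%Z -> (c %| a ^+ n - 1)%Z.
Proof. by move=> h; rewrite subrX1 dvdz_mulr. Qed.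

Definition exact_dvdq (p K : nat) (x : int * int) : bool :=
  dvdq (pk p K) x && ~~ dvdq (pk p K.+1) x.

Section Lifting.
Variable p : nat.
Hypotheses (p_pr : prime p) (p_gt2 : (2 < p)%N).
Variable D : int.
Implicit Types (x y z mu W : quad D).

Let pk_neq0 n : pk p n != 0.
Proof. by rewrite expf_neq0 // eqz_nat -lt0n prime_gt0. Qed.

Lemma dvdq_pk_mulr m n y : (m <= n)%N -> dvdq (pk p m) ((pk p n)%:~R * y).
Proof. by move=> mn; apply: dvdq_trans (pk_dvd p mn) _; rewrite dvdq_mulr ?dvdq_intr. Qed.

Lemma dvdq_pkS_mul n y : dvdq (pk p n.+1) ((pk p n)%:~R * y) = dvdq p y.
Proof. by rewrite pkS dvdq_mul2l ?pk_neq0. Qed.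

Lemma expp_1pD j y : (0 < j)%N ->
  dvdq (pk p j.+2) ((1 + (pk p j)%:~R * y) ^+ p - 1 - (pk p j.+1)%:~R * y).
Proof.
move=> j0; have [c ->] := exp1D_taylor2 ((pk p j)%:~R * y) p.
have : (p %| 'C(p, 2))%N by apply: prime_dvd_bin; rewrite ?p_gt2.
case/dvdnP=> q ->.
have -> : 1 + (pk p j)%:~R * y *+ p + ((pk p j)%:~R * y) ^+ 2 *+ (q * p)
    + ((pk p j)%:~R * y) ^+ 3 * c - 1 - (pk p j.+1)%:~R * y
  = ((pk p (j + j).+1)%:~R * y ^+ 2) *+ q + (pk p (j + j + j))%:~R * (y ^+ 3 * c) :> quad D.
  by rewrite !pkS !pkD; ring.
by apply: dvdqD; [apply: dvdqMn |]; apply: dvdq_pk_mulr; lia.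
Qed.

Lemma exact_dvdq_expp K mu i : (0 < K)%N -> exact_dvdq p K (mu - 1) ->
  exact_dvdq p (K + i) (mu ^+ (p ^ i) - 1).
Proof.
move=> K0 hK; elim: i => [|i /andP[hi hi']]; first by rewrite addn0 expn0 expr1.
have [y Ey] := dvdqP _ _ hi.
set j := (K + i)%N in Ey hi' *.
set S := (1 + (pk p j)%:~R * y) ^+ p - 1 - (pk p j.+1)%:~R * y.
have hS : dvdq (pk p j.+2) S by apply: expp_1pD; rewrite /j addn_gt0 K0.
have -> : mu ^+ (p ^ i.+1) - 1 = S + (pk p j.+1)%:~R * y.
  by rewrite /S subrK expnSr exprM -[mu ^+ _](subrK 1) Ey [_ + 1]addrC.
rewrite /exact_dvdq addnS; apply/andP; split.
  by apply: dvdqD; [apply: dvdq_trans hS; apply: pk_dvd | apply: dvdq_pk_mulr].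
rewrite Ey dvdq_pkS_mul in hi'; apply: contra hi' => h.
rewrite -(dvdq_pkS_mul j.+1); have -> : (pk p j.+1)%:~R * y = S + (pk p j.+1)%:~R * y - S.
  by rewrite addrC addKr.
exact: dvdqB.
Qed.

(* N(1 + p^j x) = 1 + 2 p^j x.1 + p^(2j) N(x), and p is odd. *)
Lemma normq_1pD_dvd_fst j x : (0 < j)%N ->
  (pk p j.+1 %| normq D (1 + (pk p j)%:~R * x) - 1)%Z -> (p%:Z %| x.1)%Z.
Proof.
move=> j0; rewrite mulq_intrl addqE /normq /= !intz.
have -> : (1 + pk p j * x.1) ^+ 2 - D * (0 + pk p j * x.2) ^+ 2 - 1 =
    pk p j * (2 * x.1) + pk p (j + j) * normq D x by rewrite pkD /normq; ring.
rewrite rpredDr; last by apply: dvdz_mulr; apply: pk_dvd; lia.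
have cop2 : coprimez p 2 by rewrite coprimezE prime_coprime // gtnNdvd.
by rewrite pkS dvdz_mul2l ?pk_neq0 // Gauss_dvdzr.
Qed.

Lemma solve_lin_mod (a b : int) : ~~ (p%:Z %| b)%Z ->
  exists t : nat, (p%:Z %| a - b *+ t)%Z.
Proof.
move=> pb; have [u [v Euv]] := Bezoutz b p.
have /eqP g1 : coprimez b p by rewrite coprimezE coprime_sym prime_coprime.
exists `|((u * a) %% p)%Z|%N.
rewrite -mulr_natr natz gez0_abs; last by rewrite modz_ge0 // eqz_nat -lt0n prime_gt0.
set q := ((u * a) %/ p)%Z.
have -> : ((u * a) %% p)%Z = u * a - q * p by rewrite {2}(divz_eq (u * a) p); ring.
suff -> : a - b * (u * a - q * p) = (a * v + b * q) * p by rewrite dvdz_mull.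
by rewrite -{1}[a]mulr1 -g1 -Euv; ring.
Qed.

(* With V := W conj(M) = 1 + p^j x we have M V = W N(M), so
   M (1 + p^j y)^t - W = M p^j (t y - x) mod p^(j+1); both coordinates of t y - x
   are divisible by p: the first ones by the norm conditions, the second ones
   by the choice of t. *)
Lemma approx_step j y M W : (0 < j)%N -> ~~ dvdq p y ->
  (pk p j.+1 %| normq D (1 + (pk p j)%:~R * y) - 1)%Z ->
  (pk p j.+1 %| normq D M - 1)%Z -> (pk p j.+1 %| normq D W - 1)%Z ->
  dvdq (pk p j) (M - W) ->
  exists t, dvdq (pk p j.+1) (M * (1 + (pk p j)%:~R * y) ^+ t - W).
Proof.
move=> j0 py hny hnM hnW hMW.
have py1 := normq_1pD_dvd_fst j0 hny.
have py2 : ~~ (p%:Z %| y.2)%Z by apply: contra py => py2; apply/andP.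
set V := W * conjq M.
have /dvdqP[x Ex] : dvdq (pk p j) (V - 1).
  have -> : V - 1 = (W - M) * conjq M + (normq D M - 1)%:~R.
    by rewrite /V intrB -mulq_conjz; ring.
  apply: dvdqD; first by apply: dvdq_mulr; rewrite dvdq_subC.
  by rewrite dvdq_intr (dvdz_trans (pk_dvd p (leqnSn j)) hnM).
have px1 : (p%:Z %| x.1)%Z.
  apply: (normq_1pD_dvd_fst j0); rewrite -Ex [1 + _]addrC subrK /V normqM normq_conj.
  have -> : normq D W * normq D M - 1 = (normq D W - 1) * normq D M + (normq D M - 1) by ring.
  by rewrite rpredD ?dvdz_mulr.
have [t ht] := solve_lin_mod x.2 py2.
exists t; have [c ->] := exp1D_taylor2 ((pk p j)%:~R * y) t.
have -> : M * (1 + (pk p j)%:~R * y *+ t + ((pk p j)%:~R * y) ^+ 2 *+ 'C(t, 2)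
      + ((pk p j)%:~R * y) ^+ 3 * c) - W =
    M * ((pk p j)%:~R * y *+ t - (V - 1))
    + M * ((pk p (j + j))%:~R * (y ^+ 2 *+ 'C(t, 2) + y ^+ 3 * c * (pk p j)%:~R))
    + W * (normq D M - 1)%:~R :> quad D.
  by rewrite /V pkD intrB -mulq_conjz; ring.
rewrite Ex -mulrnAr -mulrBr.
apply: dvdqD; first apply: dvdqD; apply: dvdq_mull.
- rewrite dvdq_pkS_mul mulrnq /dvdq /= rpredB ?rpredMn //.
  by rewrite -opprB rpredN.
- by apply: dvdq_pk_mulr; lia.
- by rewrite dvdq_intr.
Qed.

Lemma approx_powers K M mu W : (0 < K)%N -> (K <= M)%N ->
  exact_dvdq p K (mu - 1) -> (pk p M %| normq D mu - 1)%Z ->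
  dvdq (pk p K) (W - 1) -> (pk p M %| normq D W - 1)%Z ->
  exists n, dvdq (pk p M) (mu ^+ n - W).
Proof.
move=> K0 KM hmu hnmu hW hnW; rewrite -(subnKC KM).
have : (K + (M - K) <= M)%N by rewrite subnKC.
elim: (M - K)%N => [|i IH] hi; first by exists 0%N; rewrite addn0 expr0 dvdq_subC.
have [n hn] : exists n, dvdq (pk p (K + i)) (mu ^+ n - W) by apply: IH; lia.
rewrite addnS in hi *; set j := (K + i)%N in hn hi *.
have /andP[hnu hnu'] := exact_dvdq_expp i K0 hmu.
have [y Ey] := dvdqP _ _ hnu.
have Enu : mu ^+ (p ^ i) = 1 + (pk p j)%:~R * y by rewrite -Ey addrC subrK.
have down a : (pk p M %| a)%Z -> (pk p j.+1 %| a)%Z := dvdz_trans (pk_dvd p hi).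
have j0 : (0 < j)%N by rewrite /j addn_gt0 K0.
have py : ~~ dvdq p y by rewrite -(dvdq_pkS_mul j) -Ey.
have hny : (pk p j.+1 %| normq D (1 + (pk p j)%:~R * y) - 1)%Z.
  by rewrite -Enu normqX; apply/down/dvdz_subX1.
have hnM : (pk p j.+1 %| normq D (mu ^+ n) - 1)%Z.
  by rewrite normqX; apply/down/dvdz_subX1.
have [t ht] := approx_step j0 py hny hnM (down _ hnW) hn.
by exists (n + p ^ i * t)%N; rewrite exprD exprM Enu.
Qed.

Lemma coset_approx K M mu x z s : (0 < K)%N -> (K <= M)%N -> is_sign s ->
  exact_dvdq p K (mu - 1) -> (pk p M %| normq D mu - 1)%Z ->
  (pk p M %| normq D x - s)%Z -> (pk p M %| normq D z - s)%Z ->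
  dvdq (pk p K) (z - x) -> exists n, dvdq (pk p M) (mu ^+ n * x - z).
Proof.
move=> K0 KM ss hmu hnmu hx hz hzx; have ss1 := is_sign_sqr ss.
(* W plays the role of z / x: W x = s N(x) z, and N(x) = s, s^2 = 1. *)
set W := s%:~R * z * conjq x.
have hW : dvdq (pk p K) (W - 1).
  have -> : W - 1 = s%:~R * (z - x) * conjq x + s%:~R * (x * conjq x - s%:~R)
      + (s * s - 1)%:~R by rewrite /W; ring.
  rewrite ss1 subrr mulr0z addr0 mulq_conjz -intrB.
  apply: dvdqD; first by apply/dvdq_mulr/dvdq_mull.
  by rewrite dvdq_mull // dvdq_intr (dvdz_trans (pk_dvd p KM) hx).
have hnW : (pk p M %| normq D W - 1)%Z.
  rewrite /W !normqM normq_conj normq_intr.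
  have -> : s ^+ 2 * normq D z * normq D x - 1 =
      s * s * ((normq D z - s) * normq D x + s * (normq D x - s)) + (s * s * (s * s) - 1) by ring.
  by rewrite ss1 mul1r subrr addr0 rpredD ?(dvdz_mulr _ hz) ?(dvdz_mull _ hx).
have [n hn] := approx_powers K0 KM hmu hnmu hW hnW.
exists n; have -> : mu ^+ n * x - z =
    (mu ^+ n - W) * x + z * s%:~R * (x * conjq x - s%:~R) + z * (s * s - 1)%:~R.
  by rewrite /W; ring.
rewrite ss1 subrr mulr0z mulr0 addr0 mulq_conjz -intrB.
by apply: dvdqD; [apply: dvdq_mulr | apply: dvdq_mull; rewrite dvdq_intr].
Qed.
End Lifting.

(** * Elements of norm +-1 over a finite field *)

Section NormCount.
Variables (F : finFieldType) (D : F).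
Hypotheses (two_neq0 : 2%:R != 0 :> F) (D_neq0 : D != 0).
Implicit Types u v : quad D.

Definition stereo u : option F := if u.1 == 1 then None else Some (u.2 / (u.1 - 1)).

Definition unstereo (t : F) : quad D :=
  let a := (D * t ^+ 2 + 1) / (D * t ^+ 2 - 1) in (a, t * (a - 1)).

Lemma normq1_fst1 u : normq D u = 1 -> u.1 = 1 -> u = 1.
Proof.
case: u => a b /= hu a1; rewrite /normq a1 /= in hu; rewrite a1; congr pair.
have : D * b ^+ 2 = 1 ^+ 2 - (1 ^+ 2 - D * b ^+ 2) by ring.
by rewrite hu expr1n subrr => /eqP; rewrite mulf_eq0 (negPf D_neq0) expf_eq0 => /eqP.
Qed.

Lemma stereoK u : normq D u = 1 -> u.1 != 1 -> u = unstereo (u.2 / (u.1 - 1)).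
Proof.
move=> hu u1; set t := u.2 / (u.1 - 1).
have u10 : u.1 - 1 != 0 by rewrite subr_eq0.
have Eu2 : u.2 = t * (u.1 - 1) by rewrite divfK.
have Eu1 : u.1 + 1 = D * t ^+ 2 * (u.1 - 1).
  have hu' : u.1 ^+ 2 - D * (t * (u.1 - 1)) ^+ 2 = 1 by rewrite -Eu2.
  apply: (mulfI u10); transitivity (u.1 ^+ 2 - 1); first ring.
  by rewrite -[1 in LHS]hu'; ring.
have Dt1 : D * t ^+ 2 - 1 != 0.
  apply: contra two_neq0; rewrite subr_eq0 => /eqP Dt1.
  have -> : (2%:R : F) = (u.1 + 1) - (u.1 - 1) by ring.
  by rewrite Eu1 Dt1 mul1r subrr.
have -> : u = (u.1, t * (u.1 - 1)) by rewrite -Eu2; case: (u).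
rewrite /unstereo /=; suff -> : u.1 = (D * t ^+ 2 + 1) / (D * t ^+ 2 - 1) by [].
apply: (canRL (mulfK Dt1)); apply/eqP; rewrite -subr_eq0; apply/eqP.
by transitivity (D * t ^+ 2 * (u.1 - 1) - (u.1 + 1)); [ring | rewrite Eu1 subrr].
Qed.

Lemma stereo_inj : {in [set u : F * F | normq D u == 1] &, injective stereo}.
Proof.
move=> u v; rewrite !inE => /eqP hu /eqP hv; rewrite /stereo.
have [u1|u1] := eqVneq u.1 1; have [v1|v1] := eqVneq v.1 1 => //.
  by rewrite (normq1_fst1 hu u1) (normq1_fst1 hv v1).
by case=> ht; rewrite (stereoK hu u1) (stereoK hv v1) ht.
Qed.

Lemma mulq_conj_inj g : normq D g = -1 -> injective (fun u => u * conjq g).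
Proof.
move=> hg u v /(congr1 ( *%R^~ g)); rewrite -!mulrA [conjq g * g]mulrC mulq_conj hg.
have -> : ((-1 : F, 0 : F) : quad D) = -1 by rewrite oppqE /= oppr0.
by rewrite !mulrN1 => /oppr_inj.
Qed.

Lemma card_normq_pm1 :
  (#|[set u : F * F | (normq D u == 1)%R || (normq D u == -1)%R]| <= 2 * #|F|.+1)%N.
Proof.
set S1 := [set u : F * F | normq D u == 1]; set Sm := [set u : F * F | normq D u == -1].
have -> : [set u : F * F | (normq D u == 1) || (normq D u == -1)] = S1 :|: Sm.
  by apply/setP => u; rewrite !inE.
have c1 : (#|S1| <= #|F|.+1)%N by rewrite -card_option; apply: leq_card_in stereo_inj.
have c2 : (#|Sm| <= #|S1|)%N.
  have [->|[g]] := set_0Vmem Sm; first by rewrite cards0.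
  rewrite inE => /eqP hg; rewrite -(card_imset Sm (mulq_conj_inj hg)).
  apply/subset_leq_card/subsetP => w /imsetP[u]; rewrite !inE => /eqP hu ->.
  by rewrite normqM normq_conj hu hg mulrNN mulr1.
by rewrite (leq_trans (leq_card_setU _ _).1) // mul2n -addnn leq_add // (leq_trans c2).
Qed.
End NormCount.

(** * The closure of the powers of lam *)

Section Closure.
Variable p : nat.
Hypotheses (p_pr : prime p) (p_gt2 : (2 < p)%N).
Variable d : nat -> int.
Hypothesis d_coh : coh p d.

Lemma U0_normE z : U0 p d z ->
  exists2 e, is_sign e & forall m, (pk p m %| normq (d m) (z m) - e)%Z.
Proof.
case=> _ [_ hN]; have [e se hNe] : exists2 e, is_sign e & normO p d z = fun m => (e %% pk p m)%Z.
  by case: hN => ->; [exists 1; first left | exists (-1); first right].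
by exists e => // m; move/(congr1 (fun f => f m)): hNe => /eqP; rewrite eqz_mod_dvd.
Qed.

Lemma coh_mulz s a : coh p a -> coh p (fun m => (s * a m) %% pk p m)%Z.
Proof.
move=> ha m /=; apply/eqP; rewrite eqz_mod_dvd.
set q := ((s * a m.+1) %/ pk p m.+1)%Z.
have -> : ((s * a m.+1) %% pk p m.+1)%Z = s * a m.+1 - q * pk p m.+1.
  by rewrite {2}(divz_eq (s * a m.+1) (pk p m.+1)); ring.
have -> : s * a m - (s * a m.+1 - q * pk p m.+1) = - s * (a m.+1 - a m) + q * pk p m.+1.
  by ring.
by rewrite rpredD ?dvdz_mull ?(coh_le ha) // pk_dvd.
Qed.

Lemma U0_of z e : cohO p z -> is_sign e ->
  (forall m, (pk p m %| normq (d m) (z m) - e)%Z) -> U0 p d z.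
Proof.
move=> zc se hz; split=> //; split.
  (* the inverse of z is e conj(z), since z conj(z) = N(z) = e *)
  pose w m := (((e * (z m).1) %% pk p m)%Z, ((- e * (z m).2) %% pk p m)%Z).
  exists w; split; first by case: zc => z1 z2; split; apply: coh_mulz.
  apply: functional_extensionality => m.
  change (red p m ((z m : quad (d m)) * w m) = oneO p m).
  (* the ascription matters: the unit of the product ring int * int is (1, 1) *)
  have -> : oneO p m = red p m (1 : quad (d m)) by rewrite /oneO /red mod0z.
  have -> : w m = red p m (e%:~R * conjq (z m : quad (d m))).
    by rewrite /red mulq_intrl !intz /= mulrN -mulNr.
  apply/red_eq; set y := red p m _.
  have -> : (z m : quad (d m)) * y - 1 =
      (z m : quad (d m)) * (y - e%:~R * conjq (z m : quad (d m)))
      + e%:~R * ((z m : quad (d m)) * conjq (z m : quad (d m)) - e%:~R) + (e * e - 1)%:~R.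
    by ring.
  rewrite is_sign_sqr // subrr mulr0z addr0 mulq_conjz -intrB.
  apply: dvdqD; apply: dvdq_mull; last by rewrite dvdq_intr.
  by rewrite dvdq_redl subrr dvdq0.
by case: se hz => -> hz; [left | right]; apply: functional_extensionality => m;
  apply/eqP; rewrite eqz_mod_dvd; apply: hz.
Qed.

Variable lam : nat -> int * int.
Hypothesis lam_coh : cohO p lam.
Variable eps : int.
Hypothesis eps_sign : is_sign eps.
Hypothesis lam_norm : forall m, (pk p m %| normq (d m) (lam m) - eps)%Z.

Local Notation L m := (lam m : quad (d m)).

Lemma in_pkO_powO z m n :
  in_pkO (Some m) (subO p (powO p d lam n) z) <-> dvdq (pk p m) (L m ^+ n - z m).
Proof. by rewrite in_pkO_subO powO_level dvdq_redl. Qed.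

Lemma in_pkO_zpow z m n :
  in_pkO (Some m) (subO p z (powO p d lam n)) <-> dvdq (pk p m) (z m - L m ^+ n).
Proof. by rewrite in_pkO_subO powO_level dvdq_subC dvdq_redl dvdq_subC. Qed.

Lemma in_pkO_pow1 m n :
  in_pkO (Some m) (subO p (powO p d lam n) (oneO p)) <-> dvdq (pk p m) (L m ^+ n - 1).
Proof.
rewrite in_pkO_powO; have -> : oneO p m = red p m (1 : quad (d m)) by rewrite /oneO /red mod0z.
by rewrite dvdq_subC dvdq_redl dvdq_subC.
Qed.

Lemma in_closureE z :
  in_closure p d lam z <-> forall m, exists n, dvdq (pk p m) (L m ^+ n - z m).
Proof. by split=> h m; have [n /in_pkO_powO hn] := h m; exists n. Qed.

Lemma normq_lam_pow m n : (pk p m %| normq (d m) (L m ^+ n) - eps ^+ n)%Z.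
Proof. by rewrite normqX dvdz_subXX ?lam_norm. Qed.

Lemma dvdq_level_zpow z i m n : cohO p z -> (m <= n)%N ->
  dvdq (pk p m) (z n - L n ^+ i) = dvdq (pk p m) (z m - L m ^+ i).
Proof.
move=> zc; apply: (dvdq_pcoherent (X := fun n => z n - L n ^+ i)).
exact: pcoherentB (cohO_pcoherent zc) (pcoherent_exp d_coh i (cohO_pcoherent lam_coh)).
Qed.

Lemma dvdq_level_pow1 e m n : (m <= n)%N ->
  dvdq (pk p m) (L n ^+ e - 1) = dvdq (pk p m) (L m ^+ e - 1).
Proof.
apply: (dvdq_pcoherent (X := fun n => L n ^+ e - 1)).
exact: pcoherentB (pcoherent_exp d_coh e (cohO_pcoherent lam_coh)) (pcoherent_const p (1, 0)).
Qed.

Lemma closure_U0 z : cohO p z -> in_closure p d lam z -> U0 p d z.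
Proof.
move=> zc /in_closureE hc.
have norm_sign m : exists n, (pk p m %| normq (d m) (z m) - eps ^+ n)%Z.
  have [n hn] := hc m; exists n.
  rewrite -(subrKA (normq (d m) (L m ^+ n))) rpredD ?normq_lam_pow //.
  by apply: dvdq_norm; rewrite dvdq_subC.
have [n1 h1] := norm_sign 1%N.
apply: (U0_of zc (is_signX n1 eps_sign)) => -[|m]; first by rewrite /pk expr0 dvd1z.
have [n hn] := norm_sign m.+1.
suff -> : eps ^+ n1 = eps ^+ n by [].
apply: (is_sign_eq_mod p_gt2 (is_signX n1 eps_sign) (is_signX n eps_sign)); rewrite -pk1.
have -> : eps ^+ n1 - eps ^+ n = (normq (d m.+1) (z m.+1) - eps ^+ n)
    - (normq (d m.+1) (z m.+1) - normq (d 1%N) (z 1%N))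
    - (normq (d 1%N) (z 1%N) - eps ^+ n1) by ring.
have hn1 := dvdz_trans (pk_dvd p (ltn0Sn m)) hn.
exact: rpredB (rpredB hn1 (normq_pcoherent d_coh (cohO_pcoherent zc) (ltn0Sn m))) h1.
Qed.

Variable l : nat.
Hypothesis lam_order : order_modp p d lam l.

Lemma order_gt0 : (0 < l)%N.
Proof. by case: lam_order. Qed.

Lemma dvdq_pow_order : dvdq (pk p 1%N) (L 1%N ^+ l - 1).
Proof. by case: lam_order => _ [/in_pkO_pow1]. Qed.

Lemma pow_index_inj i j : (i < l)%N -> (j < l)%N ->
  dvdq (pk p 1%N) (L 1%N ^+ i - L 1%N ^+ j) -> i = j.
Proof.
wlog ij : i j / (i <= j)%N.
  move=> W il jl h; case: (leqP i j) => [ij | /ltnW ji]; first exact: W.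
  by apply/esym/W => //; rewrite dvdq_subC.
move=> il jl h; move: ij; rewrite leq_eqVlt => /orP[/eqP // | ij]; exfalso.
have [_ [_ hmin]] := lam_order; apply: (hmin (j - i)%N); first by lia.
apply/in_pkO_pow1/(dvdq_cancel_l (is_signX i eps_sign) (normq_lam_pow 1%N i)).
by rewrite mulrBr mulr1 -exprD subnKC ?(ltnW ij) // dvdq_subC.
Qed.

Lemma closure_index z : cohO p z -> in_closure p d lam z ->
  exists2 i, (i < l)%N &
    forall m, dvdq (pk p m) (L m ^+ l - 1) -> dvdq (pk p m) (z m - L m ^+ i).
Proof.
move=> zc /in_closureE hc.
have reduce m n : dvdq (pk p m) (L m ^+ l - 1) -> dvdq (pk p m) (L m ^+ n - z m) ->
    dvdq (pk p m) (z m - L m ^+ (n %% l)).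
  move=> hl hn; apply: (dvdq_sub_trans (y := L m ^+ n)); first by rewrite dvdq_subC.
  exact: dvdq_expr_modn.
have [n1 h1] := hc 1%N.
exists (n1 %% l)%N; first by rewrite ltn_mod order_gt0.
move=> [|m] hlm; first by rewrite /pk expr0 /dvdq !dvd1z.
have [n hn] := hc m.+1.
suff -> : (n1 %% l = n %% l)%N by apply: reduce.
apply: pow_index_inj; rewrite ?ltn_mod ?order_gt0 //.
apply: (dvdq_sub_trans (y := z 1%N)).
  by rewrite dvdq_subC; apply: reduce => //; apply: dvdq_pow_order.
rewrite -(dvdq_level_zpow _ zc (ltn0Sn m)).
exact: dvdq_trans (pk_dvd p (ltn0Sn m)) (reduce _ _ hlm hn).
Qed.

Lemma eps_pow_order : eps ^+ l = 1.
Proof.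
apply: (is_sign_eq_mod p_gt2 (is_signX l eps_sign)); first by left.
have := dvdq_norm dvdq_pow_order; rewrite normq1 -pk1 => h.
by rewrite -(subrKA (normq (d 1%N) (L 1%N ^+ l))) rpredD // -opprB rpredN normq_lam_pow.
Qed.

Lemma coset_sign z s i : is_sign s -> (pk p 1%N %| normq (d 1%N) (z 1%N) - s)%Z ->
  dvdq (pk p 1%N) (z 1%N - L 1%N ^+ i) -> eps ^+ i = s.
Proof.
move=> ss hz hzi; apply: (is_sign_eq_mod p_gt2 (is_signX i eps_sign) ss); rewrite -pk1.
have -> : eps ^+ i - s = (normq (d 1%N) (z 1%N) - s)
    - (normq (d 1%N) (z 1%N) - normq (d 1%N) (L 1%N ^+ i))
    - (normq (d 1%N) (L 1%N ^+ i) - eps ^+ i) by ring.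
exact: rpredB (rpredB hz (dvdq_norm hzi)) (normq_lam_pow 1%N i).
Qed.

Lemma nuO_Some_gt0 K : nuO (subO p (powO p d lam l) (oneO p)) (Some K) -> (0 < K)%N.
Proof. by case: K => // -[_ []]; case: lam_order => _ []. Qed.

Lemma nuO_Some_exact K m : nuO (subO p (powO p d lam l) (oneO p)) (Some K) ->
  (K < m)%N -> exact_dvdq p K (L m ^+ l - 1).
Proof.
move=> [hK hK1] Km; rewrite /exact_dvdq (dvdq_level_pow1 _ (ltnW Km)) (dvdq_level_pow1 _ Km).
apply/andP; split; first exact: (in_pkO_pow1 K l).1 hK.
by apply/negP => h; apply/hK1/(in_pkO_pow1 K.+1 l).2.
Qed.

Lemma closure_piece k z : nuO (subO p (powO p d lam l) (oneO p)) k -> cohO p z ->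
  in_closure p d lam z -> exists2 i, (i < l)%N & in_piece p d lam k i z.
Proof.
move=> hk zc hc; have [i il hi] := closure_index zc hc.
exists i => //; split; last exact: closure_U0.
case: k hk => [K [hK _] | hk m].
  exact/(in_pkO_zpow z K i).2/hi/(in_pkO_pow1 K l).1.
exact/(in_pkO_zpow z m i).2/hi/(in_pkO_pow1 m l).1/hk.
Qed.

Lemma piece_closure k i z : nuO (subO p (powO p d lam l) (oneO p)) k ->
  in_piece p d lam k i z -> in_closure p d lam z.
Proof.
case: k => [K|] hk [hz zU]; apply/in_closureE => m; last first.
  by exists i; rewrite dvdq_subC; apply: (in_pkO_zpow z m i).1.
have zc : cohO p z by case: zU.
have hzK := (in_pkO_zpow z K i).1 hz.
have [mK | Km] := leqP m K.
  exists i; rewrite dvdq_subC -(dvdq_level_zpow _ zc mK).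
  exact: dvdq_trans (pk_dvd p mK) hzK.
have K0 := nuO_Some_gt0 hk.
have [s ss hs] := U0_normE zU.
have hz1 : dvdq (pk p 1%N) (z 1%N - L 1%N ^+ i).
  by rewrite -(dvdq_level_zpow _ zc K0); apply: dvdq_trans (pk_dvd p K0) hzK.
have hzm : dvdq (pk p K) (z m - L m ^+ i) by rewrite dvdq_level_zpow // ltnW.
have nl := normq_lam_pow m l; have ni := normq_lam_pow m i.
rewrite eps_pow_order in nl; rewrite (coset_sign ss (hs 1%N) hz1) in ni.
have [n hn] := coset_approx p_pr p_gt2 K0 (ltnW Km) ss (nuO_Some_exact hk Km) nl ni (hs m) hzm.
by exists (l * n + i)%N; rewrite exprD exprM.
Qed.

Lemma closure_iff_piece k z : nuO (subO p (powO p d lam l) (oneO p)) k -> cohO p z ->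
  in_closure p d lam z <-> exists2 i, (i < l)%N & in_piece p d lam k i z.
Proof.
by move=> hk zc; split; [exact: closure_piece | case=> i _; apply: piece_closure hk].
Qed.

Lemma piece_level1 k i z : nuO (subO p (powO p d lam l) (oneO p)) k ->
  in_piece p d lam k i z -> dvdq (pk p 1%N) (z 1%N - L 1%N ^+ i).
Proof.
case: k => [K|] hk [hz [zc _]]; last exact: (in_pkO_zpow z 1%N i).1 (hz 1%N).
rewrite -(dvdq_level_zpow _ zc (nuO_Some_gt0 hk)).
exact: dvdq_trans (pk_dvd p (nuO_Some_gt0 hk)) ((in_pkO_zpow z K i).1 hz).
Qed.

Lemma pieces_disjoint k i j z : nuO (subO p (powO p d lam l) (oneO p)) k ->
  (i < l)%N -> (j < l)%N -> i <> j ->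
  in_piece p d lam k i z -> in_piece p d lam k j z -> False.
Proof.
move=> hk il jl ij hi hj; apply/ij/pow_index_inj => //.
apply: (dvdq_sub_trans (y := z 1%N)); last exact: piece_level1 hk hj.
by rewrite dvdq_subC; apply: piece_level1 hk hi.
Qed.

Definition reduce_Fp (x : int * int) : 'F_p * 'F_p := (x.1%:~R, x.2%:~R).

Lemma reduce_Fp_eq x y : (reduce_Fp x == reduce_Fp y) = dvdq (pk p 1%N) (x - y).
Proof.
by rewrite pk1 /reduce_Fp /dvdq xpair_eqE !(dvdz_pcharf (pchar_Fp p_pr)) !intrB !subr_eq0.
Qed.

Lemma normq_reduce_Fp D x : normq (D%:~R : 'F_p) (reduce_Fp x) = (normq D x)%:~R.
Proof. by rewrite /normq /=; ring. Qed.

Lemma U0_in_some_piece z : d 1%N <> 0 -> l = (2 * (p + 1))%N -> U0 p d z ->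
  exists2 i, (i < l)%N & in_piece p d lam (Some 1%N) i z.
Proof.
move=> d1 hl zU; have [s ss hs] := U0_normE zU.
suff [i il hi] : exists2 i, (i < l)%N & reduce_Fp (z 1%N) == reduce_Fp (L 1%N ^+ i).
  by exists i => //; split => //; apply/in_pkO_zpow; rewrite -reduce_Fp_eq.
set Dp : 'F_p := (d 1%N)%:~R.
have two_neq0 : 2%:R != 0 :> 'F_p by rewrite -(dvdn_pcharf (pchar_Fp p_pr)) gtnNdvd.
have Dp_neq0 : Dp != 0.
  have E := d_coh 1%N; rewrite pk1 in E.
  rewrite -(dvdz_pcharf (pchar_Fp p_pr)); apply/negP => /dvdz_mod0P.
  by rewrite E modz_mod -E.
set S := [set u : 'F_p * 'F_p | (normq Dp u == 1) || (normq Dp u == -1)].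
have inS e x : is_sign e -> (pk p 1%N %| normq (d 1%N) x - e)%Z -> reduce_Fp x \in S.
  move=> se; rewrite pk1 (dvdz_pcharf (pchar_Fp p_pr)) intrB subr_eq0 => /eqP hx.
  by rewrite inE normq_reduce_Fp hx; case: se => ->; rewrite ?eqxx ?orbT.
pose f (i : 'I_l) := reduce_Fp (L 1%N ^+ i).
have f_inj : injective f.
  by move=> i j /eqP; rewrite reduce_Fp_eq => /(pow_index_inj (ltn_ord i) (ltn_ord j))/val_inj.
have [/imsetP[i _ Ei] | zn] := boolP (reduce_Fp (z 1%N) \in [set f i | i in 'I_l]).
  by exists i => //; rewrite Ei.
exfalso; have : (#|reduce_Fp (z 1%N) |: [set f i | i in 'I_l]| <= #|S|)%N.
  apply/subset_leq_card; rewrite subUset sub1set (inS s) //=.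
  apply/subsetP => _ /imsetP[i _ ->].
  exact: inS (is_signX i eps_sign) (normq_lam_pow 1%N i).
rewrite cardsU1 zn card_imset // card_ord hl /=.
have := card_normq_pm1 two_neq0 Dp_neq0; rewrite card_Fp // -/S; move: #|S|; lia.
Qed.
End Closure.

Theorem theorem7 (p : nat) (d : nat -> int) (lam : nat -> int * int) (l : nat)
    (k : option nat) :
  prime p -> (2 < p)%N ->
  coh p d -> d 1%N <> 0 -> nonsquareZp p d ->
  U0 p d lam -> order_modp p d lam l ->
  nuO (subO p (powO p d lam l) (oneO p)) k ->
  (forall z, cohO p z ->
     (in_closure p d lam z <-> exists2 i, (i < l)%N & in_piece p d lam k i z)) /\
  (forall i j z, (i < l)%N -> (j < l)%N -> i <> j ->
     in_piece p d lam k i z -> in_piece p d lam k j z -> False) /\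
  (l = (2 * (p + 1))%N -> k = Some 1%N ->
     forall z, cohO p z -> (in_closure p d lam z <-> U0 p d z)).
Proof.
move=> p_pr p_gt2 d_coh d1 _ lamU lam_order hk.
have lam_coh : cohO p lam by case: lamU.
have [eps eps_sign lam_norm] := U0_normE lamU.
have piece_iff := closure_iff_piece p_pr p_gt2 d_coh lam_coh eps_sign lam_norm lam_order hk.
split; first exact: piece_iff.
split=> [i j z | hl hk1 z zc].
  exact: (pieces_disjoint p_pr p_gt2 d_coh lam_coh eps_sign lam_norm lam_order hk).
rewrite piece_iff //; subst k.
split=> [[i _ []] // | zU].
exact: (U0_in_some_piece p_pr p_gt2 d_coh eps_sign lam_norm lam_order d1 hl zU).
Qed.
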